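(* Let $\delta=(\mathbf a_1,\mathbf a_2,\mathbf a_3)$ be a nondegenerate, positively oriented m-triangle in the $xy$-plane with normal $\mathbf a_1\times\mathbf a_2/|\mathbf a_1\times\mathbf a_2|=\mathbf k$, whose shape $\delta^\ast$ is not the north pole. Let $\{\mathbf u_1,\mathbf u_2\}$ be an eigenframe of the inertia tensor $B_\delta$ in the plane, with $\mathbf u_1$ the eigenvector for the smallest eigenvalue $\lambda_1$, and let $\psi_i$ be the oriented angle from $\mathbf a_1$ to $\mathbf u_i$. Then $$\tan\frac\theta2=-\frac{1+\sin\varphi}{\cos\varphi}\tan\psi_1=\frac{1+\sin\varphi}{\cos\varphi}\cot\psi_2,$$ where $(\varphi,\theta)$ are the spherical coordinates of $\delta^\ast$ on the shape sphere: $\varphi$ the colatitude and $\theta$ the longitude (eastward, with $\theta=0$ at the binary collision shape $\mathfrak b_{23}$).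
   Context: Masses $m_1,m_2,m_3>0$, $m_1+m_2+m_3=1$; m-triangle $(\mathbf a_1,\mathbf a_2,\mathbf a_3)$ with $\sum m_i\mathbf a_i=0$. Inertia tensor $B_\delta(\mathbf u,\mathbf v)=\sum m_j(\mathbf u\times\mathbf a_j)\cdot(\mathbf v\times\mathbf a_j)$. The shape sphere $M^\ast$ (oriented m-triangles with $\sum m_i|\mathbf a_i|^2=1$ modulo rotation, with the kinematic metric $\frac14(d\varphi^2+\sin^2\varphi\,d\theta^2)$) has its equator consisting of collinear shapes and its north pole equal to the shape of the positively oriented m-triangle with $m_j|\mathbf a_j|^2=(1-m_j)/2$; the northern hemisphere consists of positively oriented shapes. $\mathfrak b_{ij}$ is the binary collision shape $\mathbf a_i=\mathbf a_j$ on the equator. The eastward direction of increasing longitude is the positive direction of the equator induced by the orientation of the northern hemisphere, in which $\mathfrak b_{23},\mathfrak b_{31},\mathfrak b_{12}$ appear in positive cyclic order. *)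

From mathcomp Require Import all_boot all_order all_algebra.
From mathcomp Require Import reals trigo.
Set Implicit Arguments. Unset Strict Implicit. Unset Printing Implicit Defensive.
Import Order.TTheory GRing.Theory Num.Theory.
Local Open Scope ring_scope.

Section ShapeSphere.
Variable R : realType.

Record vec3 := V3 { vx : R; vy : R; vz : R }.

Definition vzero : vec3 := V3 0 0 0.
Definition kvec : vec3 := V3 0 0 1.
Definition dot (u v : vec3) : R := vx u * vx v + vy u * vy v + vz u * vz v.
Definition cross (u v : vec3) : vec3 :=
  V3 (vy u * vz v - vz u * vy v) (vz u * vx v - vx u * vz v)
     (vx u * vy v - vy u * vx v).
Definition norm3 (u : vec3) : R := Num.sqrt (dot u u).
Definition scale3 (c : R) (u : vec3) : vec3 := V3 (c * vx u) (c * vy u) (c * vz u).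
Definition in_xy (u : vec3) : Prop := vz u = 0.

Definition m_triangle (m1 m2 m3 : R) (a1 a2 a3 : vec3) : Prop :=
  m1 * vx a1 + m2 * vx a2 + m3 * vx a3 = 0 /\
  m1 * vy a1 + m2 * vy a2 + m3 * vy a3 = 0 /\
  m1 * vz a1 + m2 * vz a2 + m3 * vz a3 = 0.

Definition inertia (m1 m2 m3 : R) (a1 a2 a3 : vec3) (u v : vec3) : R :=
  m1 * dot (cross u a1) (cross v a1) + m2 * dot (cross u a2) (cross v a2)
  + m3 * dot (cross u a3) (cross v a3).

Definition is_eigenvalue (B : vec3 -> vec3 -> R) (mu : R) : Prop :=
  exists v, v <> vzero /\ forall w, B v w = mu * dot v w.

Definition rot_k (psi : R) (u : vec3) : vec3 :=
  V3 (cos psi * vx u - sin psi * vy u) (sin psi * vx u + cos psi * vy u) (vz u).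

(* psi is the oriented angle (about k) from a to u (both nonzero, in the xy-plane):
   u/|u| = rot_k psi (a/|a|) *)
Definition oriented_angle (a u : vec3) (psi : R) : Prop :=
  scale3 (norm3 a) u = scale3 (norm3 u) (rot_k psi a).

(* The north pole of the shape sphere: the shape of the positively oriented
   m-triangle with m_j |b_j|^2 = (1 - m_j)/2; delta has this shape iff it is
   obtained from such a triangle by a rotation about k and a positive scaling. *)
Definition is_north_pole_shape (m1 m2 m3 : R) (a1 a2 a3 : vec3) : Prop :=
  exists (b1 b2 b3 : vec3) (c alpha : R),
    [/\ in_xy b1, in_xy b2, in_xy b3, m_triangle m1 m2 m3 b1 b2 b3 &
     0 < vz (cross b1 b2)] /\
    [/\ m1 * dot b1 b1 = (1 - m1) / 2, m2 * dot b2 b2 = (1 - m2) / 2 &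
        m3 * dot b3 b3 = (1 - m3) / 2] /\
    0 < c /\
    [/\ a1 = scale3 c (rot_k alpha b1), a2 = scale3 c (rot_k alpha b2) &
        a3 = scale3 c (rot_k alpha b3)].

(* Model of the shape sphere (for planar m-triangles in the xy-plane) via
   mass-weighted Jacobi vectors z1 = c1 (a3 - a2), z2 = c2 a1 and the Hopf map;
   the unit-sphere point (X,Y,Z) of the shape of delta: Z-axis through the north
   pole, X-axis through b_23, eastward = from X towards Y. *)
Definition moment (m1 m2 m3 : R) (a1 a2 a3 : vec3) : R :=
  m1 * dot a1 a1 + m2 * dot a2 a2 + m3 * dot a3 a3.
Definition jac1x (m1 m2 m3 : R) (a1 a2 a3 : vec3) : R :=
  Num.sqrt (m2 * m3 / (m2 + m3)) * (vx a3 - vx a2).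
Definition jac1y (m1 m2 m3 : R) (a1 a2 a3 : vec3) : R :=
  Num.sqrt (m2 * m3 / (m2 + m3)) * (vy a3 - vy a2).
Definition jac2x (m1 m2 m3 : R) (a1 a2 a3 : vec3) : R :=
  Num.sqrt (m1 / (m2 + m3)) * vx a1.
Definition jac2y (m1 m2 m3 : R) (a1 a2 a3 : vec3) : R :=
  Num.sqrt (m1 / (m2 + m3)) * vy a1.

Definition shapeX (m1 m2 m3 : R) (a1 a2 a3 : vec3) : R :=
  let x1 := jac1x m1 m2 m3 a1 a2 a3 in let y1 := jac1y m1 m2 m3 a1 a2 a3 in
  let x2 := jac2x m1 m2 m3 a1 a2 a3 in let y2 := jac2y m1 m2 m3 a1 a2 a3 in
  ((x2 ^+ 2 + y2 ^+ 2) - (x1 ^+ 2 + y1 ^+ 2)) / moment m1 m2 m3 a1 a2 a3.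
Definition shapeY (m1 m2 m3 : R) (a1 a2 a3 : vec3) : R :=
  let x1 := jac1x m1 m2 m3 a1 a2 a3 in let y1 := jac1y m1 m2 m3 a1 a2 a3 in
  let x2 := jac2x m1 m2 m3 a1 a2 a3 in let y2 := jac2y m1 m2 m3 a1 a2 a3 in
  2 * (x1 * x2 + y1 * y2) / moment m1 m2 m3 a1 a2 a3.
Definition shapeZ (m1 m2 m3 : R) (a1 a2 a3 : vec3) : R :=
  let x1 := jac1x m1 m2 m3 a1 a2 a3 in let y1 := jac1y m1 m2 m3 a1 a2 a3 in
  let x2 := jac2x m1 m2 m3 a1 a2 a3 in let y2 := jac2y m1 m2 m3 a1 a2 a3 in
  2 * (x1 * y2 - y1 * x2) / moment m1 m2 m3 a1 a2 a3.

Definition shape_coords (m1 m2 m3 : R) (a1 a2 a3 : vec3) (phi theta : R) : Prop :=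
  [/\ 0 <= phi <= pi,
      shapeX m1 m2 m3 a1 a2 a3 = sin phi * cos theta,
      shapeY m1 m2 m3 a1 a2 a3 = sin phi * sin theta &
      shapeZ m1 m2 m3 a1 a2 a3 = cos phi].

Definition cot (x : R) : R := cos x / sin x.

End ShapeSphere.

From mathcomp Require Import all_boot all_order all_algebra.
From mathcomp Require Import reals trigo.
From mathcomp Require Import ring lra.
Set Implicit Arguments. Unset Strict Implicit. Unset Printing Implicit Defensive.
Import Order.TTheory GRing.Theory Num.Theory.
Local Open Scope ring_scope.

(* View the mass-weighted Jacobi vectors
     z1 = sqrt(m2 m3 / (m2 + m3)) (a3 - a2),   z2 = sqrt(m1 / (m2 + m3)) a1
   as complex numbers.  Then I = |z1|^2 + |z2|^2 is the moment of inertia, the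
   shape of delta is the point (|z2|^2 - |z1|^2, 2 Re (z1 conj z2),
   2 Im (conj z1 z2)) / I of the unit sphere, and the inertia tensor restricted
   to the plane is I/2 - Re ((z1^2 + z2^2) conj w^2)/2 on unit vectors w.  So
   its least eigenvector u1 = e^{i a} is the major axis, e^{2 i a} being the
   direction of z1^2 + z2^2, and sin phi = T / I with T = |z1^2 + z2^2|.  With
   tan psi1 read off from u1 / z2, the formula for tan (theta / 2) becomes an
   algebraic identity that holds because T^2 = I^2 - 4 (Im (conj z1 z2))^2.
   T = 0 forces z1 = -i z2, which is the north pole.  Finally u2 is u1 turned
   by a right angle, whence cot psi2 = - tan psi1. *)

Lemma divf_mul2l (R : fieldType) (k x y : R) : k != 0 -> (k * x) / (k * y) = x / y.
Proof. by move=> k0; rewrite invfM mulrACA mulfV // mul1r. Qed.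

(* This holds also when [cos (x / 2) = 0], both sides being [_ / 0 = 0]. *)
Lemma tan_half (R : realType) (x : R) : tan (x / 2) = sin x / (1 + cos x).
Proof.
rewrite [in RHS](splitr x) sinD cosD /tan; set y := x / 2.
have [cy0|cy0] := eqVneq (cos y) 0.
  by rewrite cy0 !(mulr0, mul0r, add0r, invr0).
have -> : 1 + (cos y * cos y - sin y * sin y) = 2 * cos y ^+ 2.
  by move: (cos2Dsin2 y); rewrite !expr2; lra.
by field; rewrite cy0.
Qed.

Section JacobiAlgebra.
Variables (R : realFieldType) (x1 y1 x2 y2 : R).

Let I := x1 ^+ 2 + y1 ^+ 2 + x2 ^+ 2 + y2 ^+ 2.
Let Q := x1 * y2 - y1 * x2.
Let A := x1 ^+ 2 - y1 ^+ 2 + x2 ^+ 2 - y2 ^+ 2.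
Let B := 2 * (x1 * y1 + x2 * y2).

Lemma jacobi_discriminant : I ^+ 2 - 4 * Q ^+ 2 = A ^+ 2 + B ^+ 2.
Proof. by rewrite /I /Q /A /B; ring. Qed.

Lemma jacobi_moment_sub_area : I - 2 * Q = (x1 - y2) ^+ 2 + (y1 + x2) ^+ 2.
Proof. by rewrite /I /Q; ring. Qed.

Lemma jacobi_area_le_moment : 2 * Q <= I.
Proof. by rewrite -subr_ge0 jacobi_moment_sub_area addr_ge0 ?sqr_ge0. Qed.

Lemma jacobi_moment_eq_area : I = 2 * Q -> x1 = y2 /\ y1 = - x2.
Proof.
move=> /eqP; rewrite -subr_eq0 jacobi_moment_sub_area paddr_eq0 ?sqr_ge0 //.
by rewrite !sqrf_eq0 subr_eq0 addr_eq0 => /andP[/eqP -> /eqP ->].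
Qed.

(* In shape coordinates, with [T = I sin phi], the left side is
   [sin theta / (1 + cos theta)] and the right side is
   [- (1 + sin phi) / cos phi * tan psi]. *)
Lemma half_longitude_identity (ux uy T : R) :
  0 < Q -> 0 < T -> T ^+ 2 = A ^+ 2 + B ^+ 2 -> ux ^+ 2 + uy ^+ 2 = 1 ->
  T * (ux ^+ 2 - uy ^+ 2) = A -> 2 * T * ux * uy = B ->
  2 * (x1 * x2 + y1 * y2) / (T + (x2 ^+ 2 + y2 ^+ 2) - (x1 ^+ 2 + y1 ^+ 2)) =
  - ((I + T) / (2 * Q)) * ((x2 * uy - y2 * ux) / (x2 * ux + y2 * uy)).
Proof.
move=> Q_gt0 T_gt0 TAB u_unit eA eB.
set n := x2 * uy - y2 * ux; set d := x2 * ux + y2 * uy.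
set E := T + (x2 ^+ 2 + y2 ^+ 2) - (x1 ^+ 2 + y1 ^+ 2).
have I_gt0 : 0 < I by have := jacobi_area_le_moment; lra.
have T2 : T ^+ 2 = I ^+ 2 - 4 * Q ^+ 2 by rewrite jacobi_discriminant.
have eN : T * n * d = - (x1 * x2 + y1 * y2) * Q.
  have -> : T * n * d = (x2 ^+ 2 - y2 ^+ 2) * (2 * T * ux * uy) / 2
                        - x2 * y2 * (T * (ux ^+ 2 - uy ^+ 2)) by rewrite /n /d; field.
  by rewrite eA eB /A /B /Q; field.
have eD : T * d ^+ 2 = (I + T) * E / 4.
  have -> : T * d ^+ 2 = (T * (x2 ^+ 2 + y2 ^+ 2) * (ux ^+ 2 + uy ^+ 2)
      + (x2 ^+ 2 - y2 ^+ 2) * (T * (ux ^+ 2 - uy ^+ 2))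
      + 2 * x2 * y2 * (2 * T * ux * uy)) / 2 by rewrite /d; field.
  rewrite u_unit eA eB /E /A /B; move: T2; rewrite /I /Q => T2.
  apply: (mulIf (_ : (4 : R) != 0)); first by rewrite pnatr_eq0.
  rewrite [in RHS]mulfVK ?pnatr_eq0 //; nra.
have -> : n / d = T * n * d / (T * d ^+ 2).
  have [->|d0] := eqVneq d 0; first by rewrite !(mulr0, expr0n, invr0).
  by field; rewrite d0 gt_eqF.
have [E0|E0] := eqVneq E 0; first by rewrite eD E0 !(mulr0, mul0r, invr0).
by rewrite eN eD; field; rewrite E0 /= !gt_eqF // addr_gt0.
Qed.

End JacobiAlgebra.

Section TwoByTwoEigen.
Variables (R : realFieldType) (c a b T : R).
Hypotheses (T_gt0 : 0 < T) (Tab : T ^+ 2 = a ^+ 2 + b ^+ 2).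

Lemma min_eigenvector_exists : exists ux uy : R,
  [/\ (ux, uy) != (0, 0), (c - a) * ux - b * uy = (c - T) * ux
    & (c + a) * uy - b * ux = (c - T) * uy].
Proof.
have [a_ge0|a_lt0] := leP 0 a.
  exists (T + a), b; split; last 1 [by have := Tab; rewrite !expr2; lra | by ring].
  by rewrite xpair_eqE negb_and gt_eqF // ltr_wpDr.
exists b, (T - a); split; last 1 [by ring | by have := Tab; rewrite !expr2; lra].
by rewrite xpair_eqE negb_and orbC gt_eqF // subr_gt0 (lt_trans a_lt0).
Qed.

Lemma min_eigenvector_double_angle (l ux uy : R) :
  ux ^+ 2 + uy ^+ 2 = 1 ->
  (c - a) * ux - b * uy = l * ux -> (c + a) * uy - b * ux = l * uy -> l <= c - T ->
  T * (ux ^+ 2 - uy ^+ 2) = a /\ 2 * T * ux * uy = b.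
Proof.
move=> u_unit e1 e2 l_le; set s := c - l.
have e1' : (s - a) * ux = b * uy by rewrite /s; lra.
have e2' : b * ux = (s + a) * uy by rewrite /s; lra.
have sT2 : (s ^+ 2 - T ^+ 2) * ux = 0 /\ (s ^+ 2 - T ^+ 2) * uy = 0.
  rewrite Tab; split.
    have -> : (s ^+ 2 - (a ^+ 2 + b ^+ 2)) * ux = (s + a) * ((s - a) * ux) - b * (b * ux).
      by ring.
    by rewrite e1' e2'; ring.
  have -> : (s ^+ 2 - (a ^+ 2 + b ^+ 2)) * uy = (s - a) * ((s + a) * uy) - b * (b * uy).
    by ring.
  by rewrite -e1' -e2'; ring.
have sT : s = T.
  have : s ^+ 2 - T ^+ 2 = 0.
    by rewrite -[LHS]mulr1 -u_unit mulrDr !expr2 !mulrA (proj1 sT2) (proj2 sT2); ring.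
  move/eqP; rewrite subr_eq0 eqf_sqr => /orP[/eqP // | /eqP]; rewrite /s; have := T_gt0; lra.
rewrite sT in e1' e2'.
have h1 : (T - a) * ux * ux = b * uy * ux by rewrite e1'.
have h2 : b * ux * uy = (T + a) * uy * uy by rewrite e2'.
have h3 : (T - a) * ux * uy = b * uy * uy by rewrite e1'.
have h4 : b * ux * ux = (T + a) * uy * ux by rewrite e2'.
have unit_mul x : x = x * (ux ^+ 2 + uy ^+ 2) by rewrite u_unit mulr1.
by split; [rewrite [a]unit_mul | rewrite [b]unit_mul]; lra.
Qed.

End TwoByTwoEigen.

Section PlaneVectors.
Variable R : realType.
Implicit Types (a u v : vec3 R) (k : R).

Lemma scale3K k u : k != 0 -> scale3 k (scale3 k^-1 u) = u.
Proof. by move=> k0; case: u => x y z; rewrite /scale3 /= !mulrA divff // !mul1r. Qed.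

Lemma rot_k0 u : rot_k 0 u = u.
Proof. by case: u => x y z; rewrite /rot_k /= cos0 sin0; congr V3; ring. Qed.

Lemma dot_scale3 k u v : dot (scale3 k u) (scale3 k v) = k ^+ 2 * dot u v.
Proof. by rewrite /dot /=; ring. Qed.

Lemma cross_scale3 k u v : cross (scale3 k u) (scale3 k v) = scale3 (k ^+ 2) (cross u v).
Proof. by rewrite /cross /scale3 /=; congr V3; ring. Qed.

Lemma in_xy_scale3 k u : in_xy u -> in_xy (scale3 k u).
Proof. by rewrite /in_xy /= => ->; rewrite mulr0. Qed.

Lemma m_triangle_scale3 (m1 m2 m3 : R) k a1 a2 a3 :
  m_triangle m1 m2 m3 a1 a2 a3 ->
  m_triangle m1 m2 m3 (scale3 k a1) (scale3 k a2) (scale3 k a3).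
Proof.
rewrite /m_triangle /= => -[cx [cy cz]].
have scaleE (x1 x2 x3 : R) : m1 * (k * x1) + m2 * (k * x2) + m3 * (k * x3) =
  k * (m1 * x1 + m2 * x2 + m3 * x3) by ring.
by rewrite !scaleE cx cy cz mulr0.
Qed.

Lemma dot_self_gt0 u : u <> vzero R -> 0 < dot u u.
Proof.
case: u => x y z u0; rewrite /dot /= -!expr2.
rewrite lt0r !addr_ge0 ?sqr_ge0 // andbT !paddr_eq0 ?addr_ge0 ?sqr_ge0 // !sqrf_eq0.
by apply: contra_notN u0 => /andP[/andP[/eqP -> /eqP ->] /eqP ->].
Qed.

Lemma norm3_gt0 u : u <> vzero R -> 0 < norm3 u.
Proof. by move=> u0; rewrite sqrtr_gt0 dot_self_gt0. Qed.

Lemma unit_normal_kvec_gt0 v : scale3 (norm3 v)^-1 v = kvec R -> 0 < vz v.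
Proof.
move=> /(congr1 (@vz R)) /= nv.
have : 0 <= (norm3 v)^-1 by rewrite invr_ge0 sqrtr_ge0.
nra.
Qed.

Lemma north_pole_shape_of_moments (m1 m2 m3 s : R) a1 a2 a3 :
  0 < s -> in_xy a1 -> in_xy a2 -> in_xy a3 -> m_triangle m1 m2 m3 a1 a2 a3 ->
  0 < vz (cross a1 a2) ->
  m1 * dot a1 a1 = (1 - m1) * s -> m2 * dot a2 a2 = (1 - m2) * s ->
  m3 * dot a3 a3 = (1 - m3) * s ->
  is_north_pole_shape m1 m2 m3 a1 a2 a3.
Proof.
move=> s_gt0 h1 h2 h3 mt area d1 d2 d3.
set c := Num.sqrt (2 * s).
have c_gt0 : 0 < c by rewrite sqrtr_gt0 mulr_gt0.
have cV2 : c^-1 ^+ 2 = (2 * s)^-1 by rewrite exprVn sqr_sqrtr // ltW ?mulr_gt0.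
have moment_scaled m a : m * dot a a = (1 - m) * s ->
    m * dot (scale3 c^-1 a) (scale3 c^-1 a) = (1 - m) / 2.
  by move=> d; rewrite dot_scale3 cV2 mulrCA d; field; rewrite gt_eqF.
exists (scale3 c^-1 a1), (scale3 c^-1 a2), (scale3 c^-1 a3), c, 0.
split; first split; try exact: in_xy_scale3.
- exact: m_triangle_scale3.
- by rewrite cross_scale3 /= mulr_gt0 // exprn_gt0 // invr_gt0.
split; first by split; exact: moment_scaled.
by split=> //; split; rewrite rot_k0 scale3K // gt_eqF.
Qed.

Lemma oriented_angle_tan a u psi :
  in_xy a -> in_xy u -> a <> vzero R -> u <> vzero R -> oriented_angle a u psi ->
  tan psi = vz (cross a u) / dot a u /\ cot psi = dot a u / vz (cross a u).
Proof.
case: a => ax ay az; case: u => ux uy uz; rewrite /in_xy /= => -> -> a0 u0.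
have na_gt0 := norm3_gt0 a0; have nu_gt0 := norm3_gt0 u0.
have := dot_self_gt0 a0; rewrite /dot /= mulr0 addr0 => G_gt0.
move=> /[dup] /(congr1 (@vx R)) /= ex /(congr1 (@vy R)) /= ey.
move: na_gt0 nu_gt0 ex ey; set na := norm3 _; set nu := norm3 _.
move=> na_gt0 nu_gt0 ex ey; rewrite addr0.
set k := na / (nu * (ax * ax + ay * ay)).
have k0 : k != 0 by rewrite mulf_neq0 ?invr_eq0 ?mulf_neq0 ?gt_eqF.
have unscale x : k * x = (na * x) / (nu * (ax * ax + ay * ay)).
  by rewrite /k mulrAC.
have sinE : sin psi = k * (ax * uy - ay * ux).
  rewrite unscale mulrBr (mulrCA na ax) (mulrCA na ay) ex ey; field.
  by rewrite !gt_eqF.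
have cosE : cos psi = k * (ax * ux + ay * uy).
  rewrite unscale mulrDr (mulrCA na ax) (mulrCA na ay) ex ey; field.
  by rewrite !gt_eqF.
by rewrite /tan /cot sinE cosE !divf_mul2l.
Qed.

Lemma orthonormal_frame_cot a u v :
  in_xy a -> in_xy u -> in_xy v -> dot u u = 1 -> dot v v = 1 -> dot u v = 0 ->
  dot a v / vz (cross a v) = - (vz (cross a u) / dot a u).
Proof.
case: a => ax ay az; case: u => ux uy uz; case: v => vx vy vz.
rewrite /in_xy /dot /= => -> -> -> u1 v1 uv.
set t := ux * vy - uy * vx.
have vxE : vx = - t * uy.
  have : vx * (ux * ux + uy * uy + 0 * 0) = ux * (ux * vx + uy * vy + 0 * 0) - uy * t.
    by rewrite /t; ring.
  by rewrite u1 uv; lra.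
have vyE : vy = t * ux.
  have : vy * (ux * ux + uy * uy + 0 * 0) = uy * (ux * vx + uy * vy + 0 * 0) + ux * t.
    by rewrite /t; ring.
  by rewrite u1 uv; lra.
have t0 : t != 0 by apply/eqP => t0; move: v1; rewrite vxE vyE t0; lra.
rewrite vxE vyE.
have -> : ax * (- t * uy) + ay * (t * ux) + 0 * 0 = t * - (ax * uy - ay * ux) by ring.
have -> : ax * (t * ux) - ay * (- t * uy) = t * (ax * ux + ay * uy + 0 * 0) by ring.
by rewrite divf_mul2l // mulNr.
Qed.
End PlaneVectors.

Section CentreOfMass.
Variables (R : realFieldType) (m1 m2 m3 : R).
Hypotheses (msum : m1 + m2 + m3 = 1) (m23_neq0 : m2 + m3 != 0).

Lemma second_moment_jacobi (p1 p2 p3 q1 q2 q3 : R) :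
  m1 * p1 + m2 * p2 + m3 * p3 = 0 -> m1 * q1 + m2 * q2 + m3 * q3 = 0 ->
  m1 * p1 * q1 + m2 * p2 * q2 + m3 * p3 * q3 =
  m2 * m3 / (m2 + m3) * ((p3 - p2) * (q3 - q2)) + m1 / (m2 + m3) * (p1 * q1).
Proof.
move=> cp cq; have m1E : m1 = 1 - m2 - m3 by rewrite -msum; ring.
apply/eqP; rewrite -subr_eq0; apply/eqP.
have -> : m1 * p1 * q1 + m2 * p2 * q2 + m3 * p3 * q3 -
    (m2 * m3 / (m2 + m3) * ((p3 - p2) * (q3 - q2)) + m1 / (m2 + m3) * (p1 * q1)) =
  ((m1 * p1 + m2 * p2 + m3 * p3) * (m1 * q1 + m2 * q2 + m3 * q3)
   - (m1 * p1 + m2 * p2 + m3 * p3) * m1 * q1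
   - m1 * p1 * (m1 * q1 + m2 * q2 + m3 * q3)) / (m2 + m3).
  by rewrite m1E; field.
by rewrite cp cq; field.
Qed.

(* [(m2 + m3) a2 = - m1 a1 - m3 (a3 - a2)], and the cross term vanishes. *)
Lemma moment_of_orthogonal_jacobi (p1 q1 p2 q2 p3 q3 : R) :
  m1 * p1 + m2 * p2 + m3 * p3 = 0 -> m1 * q1 + m2 * q2 + m3 * q3 = 0 ->
  (p3 - p2) * p1 + (q3 - q2) * q1 = 0 ->
  m2 * m3 * ((p3 - p2) ^+ 2 + (q3 - q2) ^+ 2) = m1 * (p1 ^+ 2 + q1 ^+ 2) ->
  m2 * (p2 ^+ 2 + q2 ^+ 2) = (1 - m2) * (m1 * (p1 ^+ 2 + q1 ^+ 2)) / (m2 + m3).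
Proof.
move=> cp cq perp norms.
have eP : (m2 + m3) * p2 = - (m1 * p1) - m3 * (p3 - p2) by have := cp; lra.
have eQ : (m2 + m3) * q2 = - (m1 * q1) - m3 * (q3 - q2) by have := cq; lra.
apply: (mulfI (expf_neq0 2 m23_neq0)).
have -> : (m2 + m3) ^+ 2 * (m2 * (p2 ^+ 2 + q2 ^+ 2)) =
  m2 * (((m2 + m3) * p2) ^+ 2 + ((m2 + m3) * q2) ^+ 2) by ring.
rewrite eP eQ.
have -> : m2 * ((- (m1 * p1) - m3 * (p3 - p2)) ^+ 2 + (- (m1 * q1) - m3 * (q3 - q2)) ^+ 2) =
  m2 * m1 ^+ 2 * (p1 ^+ 2 + q1 ^+ 2) + m3 * (m2 * m3 * ((p3 - p2) ^+ 2 + (q3 - q2) ^+ 2))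
  + 2 * m1 * m2 * m3 * ((p3 - p2) * p1 + (q3 - q2) * q1) by ring.
rewrite norms perp (_ : m1 = 1 - m2 - m3); first by field.
by rewrite -msum; ring.
Qed.

End CentreOfMass.

Section PlanarMTriangle.
Variables (R : realType) (m1 m2 m3 p1 q1 p2 q2 p3 q3 : R).
Hypotheses (m1_gt0 : 0 < m1) (m2_gt0 : 0 < m2) (m3_gt0 : 0 < m3).
Hypothesis msum : m1 + m2 + m3 = 1.
Hypotheses (comx : m1 * p1 + m2 * p2 + m3 * p3 = 0)
           (comy : m1 * q1 + m2 * q2 + m3 * q3 = 0).

Let a1 := V3 p1 q1 0.
Let a2 := V3 p2 q2 0.
Let a3 := V3 p3 q3 0.
Let k1 := Num.sqrt (m2 * m3 / (m2 + m3)).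
Let k2 := Num.sqrt (m1 / (m2 + m3)).
Let x1 := k1 * (p3 - p2).
Let y1 := k1 * (q3 - q2).
Let x2 := k2 * p1.
Let y2 := k2 * q1.
Let I := x1 ^+ 2 + y1 ^+ 2 + x2 ^+ 2 + y2 ^+ 2.
Let Q := x1 * y2 - y1 * x2.
Let A := x1 ^+ 2 - y1 ^+ 2 + x2 ^+ 2 - y2 ^+ 2.
Let B := 2 * (x1 * y1 + x2 * y2).
Let T := Num.sqrt (A ^+ 2 + B ^+ 2).

Let m23_gt0 : 0 < m2 + m3. Proof. by rewrite addr_gt0. Qed.
Let m23_neq0 : m2 + m3 != 0. Proof. by rewrite gt_eqF. Qed.

Let k1_gt0 : 0 < k1. Proof. by rewrite sqrtr_gt0 divr_gt0 ?mulr_gt0. Qed.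
Let k2_gt0 : 0 < k2. Proof. by rewrite sqrtr_gt0 divr_gt0. Qed.
Let k1_sq : k1 ^+ 2 = m2 * m3 / (m2 + m3).
Proof. by rewrite sqr_sqrtr // ltW // divr_gt0 ?mulr_gt0. Qed.
Let k2_sq : k2 ^+ 2 = m1 / (m2 + m3).
Proof. by rewrite sqr_sqrtr // ltW // divr_gt0. Qed.

Lemma second_moments_jacobi :
  [/\ m1 * p1 * p1 + m2 * p2 * p2 + m3 * p3 * p3 = x1 ^+ 2 + x2 ^+ 2,
      m1 * q1 * q1 + m2 * q2 * q2 + m3 * q3 * q3 = y1 ^+ 2 + y2 ^+ 2 &
      m1 * p1 * q1 + m2 * p2 * q2 + m3 * p3 * q3 = x1 * y1 + x2 * y2].
Proof.
rewrite !(second_moment_jacobi msum m23_neq0) // -k1_sq -k2_sq.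
by rewrite /x1 /y1 /x2 /y2; split; ring.
Qed.

Lemma moment_jacobi : moment m1 m2 m3 a1 a2 a3 = I.
Proof.
have [Sxx Syy _] := second_moments_jacobi.
rewrite /moment /dot /= /I; move: Sxx Syy; set X := x1; set Y := y1; lra.
Qed.

Lemma inertia_jacobi (ux uy : R) (w : vec3 R) :
  2 * inertia m1 m2 m3 a1 a2 a3 (V3 ux uy 0) w =
  vx w * ((I - A) * ux - B * uy) + vy w * ((I + A) * uy - B * ux).
Proof.
have [Sxx Syy Sxy] := second_moments_jacobi.
have -> : I - A = 2 * (y1 ^+ 2 + y2 ^+ 2) by rewrite /I /A; ring.
have -> : I + A = 2 * (x1 ^+ 2 + x2 ^+ 2) by rewrite /I /A; ring.
case: w => wx wy wz; rewrite /inertia /dot /cross /B /= -Sxx -Syy -Sxy; ring.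
Qed.

Lemma jacobi_area_gt0 : 0 < p1 * q2 - q1 * p2 -> 0 < Q.
Proof.
move=> area.
have e : m3 * ((p3 - p2) * q1 - (q3 - q2) * p1) = (m2 + m3) * (p1 * q2 - q1 * p2).
  apply/eqP; rewrite -subr_eq0; apply/eqP.
  transitivity (q1 * (m1 * p1 + m2 * p2 + m3 * p3) - p1 * (m1 * q1 + m2 * q2 + m3 * q3)).
    by ring.
  by rewrite comx comy; ring.
have -> : Q = k1 * k2 * ((p3 - p2) * q1 - (q3 - q2) * p1) by rewrite /Q /x1 /y1 /x2 /y2; ring.
rewrite !mulr_gt0 // -(pmulr_rgt0 _ m3_gt0) e mulr_gt0 //.
Qed.

Lemma north_pole_shape_of_moment_eq_area :
  0 < p1 * q2 - q1 * p2 -> I = 2 * Q -> is_north_pole_shape m1 m2 m3 a1 a2 a3.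
Proof.
move=> area /(@jacobi_moment_eq_area _ x1 y1 x2 y2); rewrite /x1 /y1 /x2 /y2 => -[ex ey].
have k10 : k1 != 0 by rewrite gt_eqF.
have perp : (p3 - p2) * p1 + (q3 - q2) * q1 = 0.
  by apply: (mulfI k10); rewrite mulr0 mulrDr !mulrA ex ey; ring.
have norms : m2 * m3 * ((p3 - p2) ^+ 2 + (q3 - q2) ^+ 2) = m1 * (p1 ^+ 2 + q1 ^+ 2).
  have : k1 ^+ 2 * ((p3 - p2) ^+ 2 + (q3 - q2) ^+ 2) = k2 ^+ 2 * (p1 ^+ 2 + q1 ^+ 2).
    by rewrite mulrDr -!exprMn ex ey; ring.
  rewrite k1_sq k2_sq => h.
  have -> : m2 * m3 * ((p3 - p2) ^+ 2 + (q3 - q2) ^+ 2) =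
    m2 * m3 / (m2 + m3) * ((p3 - p2) ^+ 2 + (q3 - q2) ^+ 2) * (m2 + m3) by field.
  by rewrite h; field.
have G_gt0 : 0 < p1 ^+ 2 + q1 ^+ 2.
  rewrite lt0r addr_ge0 ?sqr_ge0 // andbT paddr_eq0 ?sqr_ge0 // !sqrf_eq0.
  by apply: contraTN area => /andP[/eqP -> /eqP ->]; rewrite !mul0r subrr ltxx.
have dotE (p q : R) : dot (V3 p q 0) (V3 p q 0) = p ^+ 2 + q ^+ 2.
  by rewrite /dot /= mulr0 addr0 !expr2.
apply: (north_pole_shape_of_moments (s := m1 * (p1 ^+ 2 + q1 ^+ 2) / (m2 + m3))) => //.
- by rewrite divr_gt0 ?mulr_gt0.
- by split; rewrite //= !mulr0 !addr0.
- by rewrite dotE (_ : 1 - m1 = m2 + m3); [field | rewrite -msum; ring].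
- by rewrite dotE (moment_of_orthogonal_jacobi msum m23_neq0 comx comy) // [RHS]mulrA.
rewrite dotE [RHS]mulrA (addrC m2).
rewrite (@moment_of_orthogonal_jacobi _ m1 m3 m2 _ _ p1 q1 p3 q3 p2 q2) //.
- by rewrite -msum; ring.
- by rewrite addrC.
- by rewrite -comx; ring.
- by rewrite -comy; ring.
- by rewrite -oppr0 -perp; ring.
by rewrite -norms; ring.
Qed.

Let T_sq : T ^+ 2 = A ^+ 2 + B ^+ 2.
Proof. by rewrite sqr_sqrtr // addr_ge0 ?sqr_ge0. Qed.

Lemma is_eigenvalue_jacobi_min :
  0 < T -> is_eigenvalue (inertia m1 m2 m3 a1 a2 a3) ((I - T) / 2).
Proof.
move=> T_gt0; have [ux [uy [u0 e1 e2]]] := min_eigenvector_exists I T_gt0 T_sq.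
exists (V3 ux uy 0); split; first by case=> ux0 uy0; move: u0; rewrite ux0 uy0 eqxx.
move=> w; apply: (mulfI (_ : 2 != 0)); first by rewrite pnatr_eq0.
by rewrite inertia_jacobi e1 e2 /dot /=; field.
Qed.

Lemma shape_coords_jacobi (phi theta : R) :
  0 < Q -> shape_coords m1 m2 m3 a1 a2 a3 phi theta ->
  [/\ cos phi = 2 * Q / I, sin phi = T / I,
      T * sin theta = 2 * (x1 * x2 + y1 * y2) &
      T * cos theta = (x2 ^+ 2 + y2 ^+ 2) - (x1 ^+ 2 + y1 ^+ 2)].
Proof.
move=> Q_gt0 [phi_range hX hY hZ].
have Xeq : ((x2 ^+ 2 + y2 ^+ 2) - (x1 ^+ 2 + y1 ^+ 2)) / I = sin phi * cos theta.
  by rewrite -moment_jacobi; exact: hX.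
have Yeq : 2 * (x1 * x2 + y1 * y2) / I = sin phi * sin theta.
  by rewrite -moment_jacobi; exact: hY.
have cosE : cos phi = 2 * Q / I by rewrite -moment_jacobi -hZ.
have I_gt0 : 0 < I by have := jacobi_area_le_moment x1 y1 x2 y2; rewrite -/I -/Q; lra.
have I0 : I != 0 by rewrite gt_eqF.
have sinE : sin phi = T / I.
  have TI_ge0 : 0 <= T / I by rewrite divr_ge0 ?sqrtr_ge0 ?ltW.
  apply/eqP; rewrite -(eqrXn2 (_ : 0 < 2)%N (sin_ge0_pi phi_range) TI_ge0) //.
  rewrite sin2cos2 cosE !expr_div_n T_sq -(jacobi_discriminant x1 y1 x2 y2) -/I -/Q.
  by apply/eqP; field.
have TE : T = I * sin phi by rewrite sinE mulrC divfK.
split=> //; rewrite TE -mulrA.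
  by rewrite -Yeq mulrC divfK.
by rewrite -Xeq mulrC divfK.
Qed.

Lemma tan_half_longitude (u : vec3 R) (lam phi theta : R) :
  0 < vz (cross a1 a2) -> ~ is_north_pole_shape m1 m2 m3 a1 a2 a3 ->
  in_xy u -> dot u u = 1 ->
  (forall w, inertia m1 m2 m3 a1 a2 a3 u w = lam * dot u w) ->
  (forall mu, is_eigenvalue (inertia m1 m2 m3 a1 a2 a3) mu -> lam <= mu) ->
  shape_coords m1 m2 m3 a1 a2 a3 phi theta ->
  tan (theta / 2) = - ((1 + sin phi) / cos phi) * (vz (cross a1 u) / dot a1 u).
Proof.
case: u => ux uy uz area not_np; rewrite /in_xy /= => -> u_unit eig lam_min coords.
have Q_gt0 := jacobi_area_gt0 area.
have I_gt0 : 0 < I by have := jacobi_area_le_moment x1 y1 x2 y2; rewrite -/I -/Q; lra.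
have T_gt0 : 0 < T.
  rewrite lt0r sqrtr_ge0 andbT; apply: contra_notN not_np => /eqP T0.
  apply: north_pole_shape_of_moment_eq_area => //.
  have disc0 : I ^+ 2 - 4 * Q ^+ 2 = 0.
    by rewrite (jacobi_discriminant x1 y1 x2 y2) -T_sq T0 expr0n.
  have : (I - 2 * Q) * (I + 2 * Q) = 0 by rewrite -disc0; ring.
  by move/eqP; rewrite mulf_eq0 => /orP[/eqP | /eqP]; lra.
have lam_le : 2 * lam <= I - T.
  by have := lam_min _ (is_eigenvalue_jacobi_min T_gt0); lra.
have e1 : (I - A) * ux - B * uy = 2 * lam * ux.
  by have := inertia_jacobi ux uy (V3 1 0 0); rewrite eig /dot /=; lra.
have e2 : (I + A) * uy - B * ux = 2 * lam * uy.
  by have := inertia_jacobi ux uy (V3 0 1 0); rewrite eig /dot /=; lra.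
have u_unit' : ux ^+ 2 + uy ^+ 2 = 1 by rewrite -u_unit /dot /= mulr0 addr0 !expr2.
have [eA eB] := min_eigenvector_double_angle T_gt0 T_sq u_unit' e1 e2 lam_le.
have [cosE sinE sinT cosT] := shape_coords_jacobi Q_gt0 coords.
rewrite tan_half -(divf_mul2l _ _ (lt0r_neq0 T_gt0)) mulrDr mulr1 sinT cosT addrA.
rewrite (@half_longitude_identity _ x1 y1 x2 y2 ux uy T Q_gt0 T_gt0 T_sq u_unit' eA eB).
congr (- _ * _); first by rewrite sinE cosE -/I -/Q; field; rewrite !gt_eqF.
have -> : x2 * uy - y2 * ux = k2 * (p1 * uy - q1 * ux) by rewrite /x2 /y2; ring.
have -> : x2 * ux + y2 * uy = k2 * (p1 * ux + q1 * uy) by rewrite /x2 /y2; ring.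
by rewrite divf_mul2l ?lt0r_neq0 // /dot /= mulr0 addr0.
Qed.

End PlanarMTriangle.

Theorem mainTheorem9 (R : realType) (m1 m2 m3 : R) (a1 a2 a3 : vec3 R)
    (u1 u2 : vec3 R) (lam1 lam2 psi1 psi2 phi theta : R) :
  0 < m1 -> 0 < m2 -> 0 < m3 -> m1 + m2 + m3 = 1 ->
  (* delta = (a1,a2,a3) is an m-triangle in the xy-plane *)
  m_triangle m1 m2 m3 a1 a2 a3 -> in_xy a1 -> in_xy a2 -> in_xy a3 ->
  (* nondegenerate, positively oriented with normal k *)
  cross a1 a2 <> vzero R ->
  scale3 (norm3 (cross a1 a2))^-1 (cross a1 a2) = kvec R ->
  (* its shape is not the north pole *)
  ~ is_north_pole_shape m1 m2 m3 a1 a2 a3 ->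
  (* {u1, u2} is an (orthonormal) eigenframe of B_delta in the plane *)
  in_xy u1 -> in_xy u2 ->
  dot u1 u1 = 1 -> dot u2 u2 = 1 -> dot u1 u2 = 0 ->
  (forall w, inertia m1 m2 m3 a1 a2 a3 u1 w = lam1 * dot u1 w) ->
  (forall w, inertia m1 m2 m3 a1 a2 a3 u2 w = lam2 * dot u2 w) ->
  (* lam1 is the smallest eigenvalue *)
  (forall mu, is_eigenvalue (inertia m1 m2 m3 a1 a2 a3) mu -> lam1 <= mu) ->
  (* psi_i is the oriented angle from a1 to u_i *)
  oriented_angle a1 u1 psi1 -> oriented_angle a1 u2 psi2 ->
  (* (phi, theta) spherical coordinates of the shape of delta *)
  shape_coords m1 m2 m3 a1 a2 a3 phi theta ->
  tan (theta / 2) = - ((1 + sin phi) / cos phi) * tan psi1 /\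
  - ((1 + sin phi) / cos phi) * tan psi1 = (1 + sin phi) / cos phi * cot psi2.
Proof.
case: a1 a2 a3 => [p1 q1 z1] [p2 q2 z2] [p3 q3 z3].
rewrite {1 2 3}/in_xy /= => m1_gt0 m2_gt0 m3_gt0 msum [comx [comy _]] -> -> -> a12_neq0.
move=> /unit_normal_kvec_gt0 area not_np u1_xy u2_xy u1_unit u2_unit u12 eig1 _ lam_min.
move=> or1 or2 coords.
have a1_neq0 : V3 p1 q1 0 <> vzero R.
  by move=> a1_0; apply: a12_neq0; rewrite a1_0 /cross /= !(mul0r, mulr0, subrr).
have a1_xy : in_xy (V3 p1 q1 0) by [].
have unit_neq0 u : dot u u = 1 -> u <> vzero R.
  by move=> + u0; rewrite u0 /dot /= !mulr0 !addr0 => /eqP; rewrite eq_sym oner_eq0.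
have [tan1 _] := oriented_angle_tan a1_xy u1_xy a1_neq0 (unit_neq0 _ u1_unit) or1.
have [_ cot2] := oriented_angle_tan a1_xy u2_xy a1_neq0 (unit_neq0 _ u2_unit) or2.
rewrite tan1 cot2 (orthonormal_frame_cot a1_xy u1_xy u2_xy u1_unit u2_unit u12).
split; last by rewrite mulrN mulNr.
exact: tan_half_longitude area not_np u1_xy u1_unit eig1 lam_min coords.
Qed.
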